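(* In the polynomial ring $\mathbb{Z}_2[y_2,y_3]$ define a sequence $(z_n)_{n\geq1}$ by $z_1=0$, $z_2=1$, $z_3=0$ and $z_n=y_2z_{n-2}+y_3z_{n-3}$ for $n\geq4$. Then $z_n\neq 0$ for every $n\geq1$ that is not of the form $2^i-1$. *)

From HB Require Import structures.
From mathcomp Require Import all_boot all_order all_algebra.
From mathcomp Require Import mpoly.
Set Implicit Arguments. Unset Strict Implicit. Unset Printing Implicit Defensive.
Import GRing.Theory.
Local Open Scope ring_scope.

Definition PR := {mpoly 'F_2[2]}.
Definition y2 : PR := 'X_(0 : 'I_2).
Definition y3 : PR := 'X_(1 : 'I_2).

(* ztrip m = (z_{m+1}, z_{m+2}, z_{m+3}). *)
Fixpoint ztrip (m : nat) : PR * PR * PR :=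
  match m with
  | 0%N => (0, 1, 0)
  | m'.+1 => let: (a, b, c) := ztrip m' in (b, c, y2 * b + y3 * a)
  end.

(* z n for n >= 1 (z 0 is not used). *)
Definition z (n : nat) : PR := (ztrip n.-1).1.1.

From mathcomp Require Import all_boot all_order all_algebra.
From mathcomp Require Import mpoly ring zify.
Local Open Scope ring_scope.
Import GRing.Theory.

(* In characteristic 2 squaring is additive, which gives the doubling formulas
   z_(2k) = z_(k+1)^2 + y2 z_k^2 and z_(2k+1) = y3 z_k^2.  A polynomial
   p^2 + y2 q^2 only vanishes when p = q = 0: its derivative in y2 is q^2.
   Hence z_n != 0 propagates by strong induction from the indices k, k+1 to 2k
   and from k to 2k+1; the only obstruction is n + 1 being a power of 2, because
   two consecutive integers >= 2 are never both powers of 2. *)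

Section MPolyChar2.

Variables (n : nat) (R : idomainType).
Hypothesis pcharR2 : (2 \in [pchar R])%N.
Local Notation MP := {mpoly R[n]}.

Lemma mpoly_pchar2 : (2 \in [pchar MP])%N.
Proof. exact: (rmorph_pchar (@mpolyC n R)). Qed.

Lemma mderiv_sqr i (p : MP) : (p ^+ 2)^`M(i) = 0.
Proof.
by rewrite expr2 mderivM [p * _]mulrC -mulr2n (mulrn_pchar mpoly_pchar2).
Qed.

Lemma mderivXX i : ('X_i : MP)^`M(i) = 1.
Proof.
by rewrite mderivX mnm1E eqxx -[X in (X - _)%MM]add0m addmK mpolyX0 scale1r.
Qed.

Lemma mpolyX_neq0 i : ('X_i : MP) != 0.
Proof.
by apply: contra_neq (@oner_neq0 MP) => X0; rewrite -(mderivXX i) X0 mderiv0.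
Qed.

Lemma add_sqr_mulX_sqr_eq0 i (p q : MP) :
  (p ^+ 2 + 'X_i * q ^+ 2 == 0) = (p == 0) && (q == 0).
Proof.
apply/idP/andP => [/eqP pq0 | [/eqP-> /eqP->]]; last first.
  by rewrite expr0n mulr0 addr0.
have q0 : q = 0.
  have := congr1 (mderiv i) pq0.
  rewrite mderivD mderivM !mderiv_sqr mderivXX mderiv0 mulr0 add0r addr0 mul1r.
  by move/eqP; rewrite expf_eq0 => /andP[_ /eqP].
move: pq0; rewrite q0 expr0n mulr0 addr0 => /eqP.
by rewrite expf_eq0 => /andP[_ ->].
Qed.

End MPolyChar2.

Lemma PR_pchar2 : (2 \in [pchar PR])%N.
Proof. exact/mpoly_pchar2/pchar_Fp. Qed.

(* The junk value z 0 equals z 1 = 0, so this and z_double also hold at n = 0. *)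
Lemma z_rec n : z n.+3 = y2 * z n.+1 + y3 * z n.
Proof.
case: n => [|n]; first by rewrite /z /= !mulr0 addr0.
by rewrite /z /=; case: (ztrip n) => [[a b] c].
Qed.

Lemma z_double n :
  z n.*2 = z n.+1 ^+ 2 + y2 * z n ^+ 2 /\ z n.*2.+1 = y3 * z n ^+ 2.
Proof.
elim/ltn_ind: n => -[|[|n]] IH.
- by rewrite /z /= !(expr2, mul0r, mulr0, addr0).
- by rewrite /z /= !(expr2, mul0r, mulr0, mul1r, addr0).
have [_ IHo] := IH n (ltnW (ltnSn _)).
have [IHe' IHo'] := IH n.+1 (ltnSn _).
rewrite !doubleS in IHe' IHo' *; split.
  rewrite (z_rec n.*2.+1) (z_rec n) IHe' IHo.
  by rewrite sqrrD (mulrn_pchar PR_pchar2) addr0; ring.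
rewrite (z_rec n.*2.+2) IHe' IHo'.
by rewrite -[RHS]addr0 -(mulrn_pchar PR_pchar2 (y2 * y3 * z n.+1 ^+ 2)); ring.
Qed.

Lemma pow2S_pow2 i j : ((2 ^ i).+1 = 2 ^ j)%N -> i = 0%N.
Proof.
case: i => // i; case: j => [|j] e.
  by move: (expn_gt0 2 i.+1); rewrite -ltnS e.
by have := congr1 odd e; rewrite /= !oddX.
Qed.

Lemma z_neq0 n : (0 < n)%N -> (forall i, n.+1 <> 2 ^ i)%N -> z n != 0.
Proof.
elim/ltn_ind: n => n IH n_gt0 n1_npow2.
have [k [Dn|Dn]] : exists k, n = k.*2 \/ n = k.*2.+1.
  exists n./2; case: (boolP (odd n)) => [n_odd|/negbTE n_odd]; [right|left];
  by rewrite -[LHS]odd_double_half n_odd.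
- move: n_gt0 n1_npow2 IH; rewrite {}Dn; case: k => [|[|k]] // _ n1_npow2 IH.
    by rewrite /z /= oner_neq0.
  rewrite (z_double k.+2).1 /y2 add_sqr_mulX_sqr_eq0 ?PR_pchar2 // negb_and.
  have [zk0|] := eqVneq (z k.+2) 0; last by rewrite orbT.
  rewrite orbF; apply: (IH) => [|//|j k3_pow2]; first lia.
  (* z k.+2 = 0 forces k.+3 to be a power of 2, so k.+4 is not. *)
  move/eqP: zk0; apply/negP; apply: IH => [|//|i k2_pow2]; first lia.
  by move: k3_pow2; rewrite k2_pow2 => /pow2S_pow2 i0; rewrite i0 in k2_pow2.
- move: n_gt0 n1_npow2 IH; rewrite {}Dn; case: k => [_ /(_ 1%N) //|k _ n1_npow2 IH].
  rewrite (z_double k.+1).2 mulf_neq0 ?mpolyX_neq0 // expf_neq0 //.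
  apply: IH => [|//|i k_pow2]; first lia.
  by apply: (n1_npow2 i.+1); rewrite expnS -k_pow2 mul2n.
Qed.

Theorem lemma9p3 (n : nat) :
  (1 <= n)%N -> (forall i : nat, n <> (2 ^ i - 1)%N) -> z n != 0.
Proof.
move=> n_gt0 n_npow2; apply: z_neq0 => // i n1E.
by apply: (n_npow2 i); rewrite -n1E subn1.
Qed.
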